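(* Let $\tau^R=\big(\tfrac12+\tfrac{\sqrt3}{2}i,\ (\tfrac12+\tfrac{\sqrt3}{6}i,\ \tfrac{\sqrt6}{3})\big)$ be the normalized regular tetrahedron and $\tau^C=\big(\tfrac12+\tfrac12 i,\ (\tfrac12+\tfrac12 i,\ \tfrac{\sqrt2}{2})\big)$ the normalization of the cube corner tetrahedron with vertices $(0,0,0),(1,0,0),(0,1,0),(0,0,1)$. Then $\tau^C\in\Gamma_{\tau^R}$, and hence $\Gamma_{\tau^C}\subseteq\Gamma_{\tau^R}$. Explicitly, $\tau^C$ is reached from $\tau^R$ via $\Phi_L(\tau^R)=\Phi_R(\tau^R)=\big(\tfrac14+\tfrac{\sqrt3}{4}i,(\tfrac12+\tfrac{\sqrt3}{6}i,\tfrac{\sqrt6}{3})\big)\xrightarrow{\Phi_R}\big(\tfrac14+\tfrac{\sqrt3}{4}i,(\tfrac12+\tfrac{\sqrt3}{3}i,\tfrac{\sqrt6}{6})\big)\xrightarrow{\Phi_L}\big(\tfrac12+\tfrac{\sqrt3}{6}i,(\tfrac13,\tfrac{\sqrt2}{3})\big)\xrightarrow{\Phi_R}\big(\tfrac12+\tfrac{\sqrt2}{4}i,(\tfrac12+\tfrac{\sqrt2}{4}i,\tfrac{\sqrt2}{4})\big)\xrightarrow{\Phi_L}\big(\tfrac14+\tfrac{\sqrt3}{4}i,(\tfrac12+\tfrac{\sqrt3}{6}i,\tfrac{\sqrt6}{6})\big)\xrightarrow{\Phi_L}\big(\tfrac12+\tfrac12 i,(\tfrac12,\tfrac12)\bi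g)\xrightarrow{\Phi_L}\tau^C$.
   Context: Let $\mathcal S$ be the set of non-degenerate tetrahedra in $\mathbb R^3$. Let $\mathcal B=\{z\in\mathbb C:\ \Im z>0,\ 0<\Re z\le \tfrac12,\ |z-1|\le 1\}$, for $z\in\mathcal B$ let $\mathcal V(z)=\{(w,t)\in\mathbb C\times\mathbb R_{>0}:\ |z|^2\le |w|^2+t^2\le 1,\ |z|^2\le |w-1|^2+t^2\le 1,\ |w-z|^2+t^2\le 1\}$, and $\mathcal T=\{(z,(w,t)):\ z\in\mathcal B,\ (w,t)\in\mathcal V(z)\}$. Normalization $N:\mathcal S\to\mathcal T$: given $T\in\mathcal S$, choose a longest edge and label its endpoints $A,B$ and a third vertex $C$ so that $AC$ is a shortest edge among the four edges sharing exactly one endpoint with $AB$ (relabelling $A\leftrightarrow B$ if needed); if several labellings qualify, choose one minimizing $\angle BAC$; remaining ties are resolved arbitrarily. Let $D$ be the fourth vertex. Apply the similarity (translation, rotation, scaling by $1/|AB|$) sending $A\mapsto(0,0,0)$, $B\mapsto(1,0,0)$, $C\mapsto(c_1,c_2,0)$ with $c_2>0$; then $D\mapsto(d_1,d_2,d_3)$, and $N(T)=(c_1+ic_2,(d_1+id_2,|d_3|))$. LEB maps: for $\tau=(z,(w,t))\in\mathcal T$ with $z=z_1+iz_2$, $w=w_1+iw_2$, let $A=(0,0,0)$, $B=(1,0,0)$, $C=(z_1,z_2,0)$, $D=(w_1,w_2,t)$, $M=(\tfrac12,0,0)$. Define $\Phi_L(\tau)=N(AMCD)$ and $\Phi_R(\tau)=N(MBCD)$.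 The orbit of $\tau$ is $\Gamma_\tau=\bigcup_{n\ge0}\Gamma_\tau^{(n)}$ where $\Gamma_\tau^{(0)}=\{\tau\}$ and $\Gamma_\tau^{(n+1)}=\Phi_L(\Gamma_\tau^{(n)})\cup\Phi_R(\Gamma_\tau^{(n)})$. *)

From Stdlib Require Import Reals Lra Permutation List.
Import ListNotations.
Open Scope R_scope.

Record pt : Type := Pt { px : R; py : R; pz : R }.

Definition dot (p q : pt) : R := px p * px q + py p * py q + pz p * pz q.
Definition vsub (p q : pt) : pt := Pt (px p - px q) (py p - py q) (pz p - pz q).
Definition dist2 (p q : pt) : R := dot (vsub p q) (vsub p q).

Definition angle (B A C : pt) : R :=
  acos (dot (vsub B A) (vsub C A) / (sqrt (dist2 A B) * sqrt (dist2 A C))).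

Record tetra : Type := Tetra { v0 : pt; v1 : pt; v2 : pt; v3 : pt }.

Definition det3 (u v w : pt) : R :=
  px u * (py v * pz w - pz v * py w)
  - py u * (px v * pz w - pz v * px w)
  + pz u * (px v * py w - py v * px w).

Definition nondegenerate (T : tetra) : Prop :=
  det3 (vsub (v1 T) (v0 T)) (vsub (v2 T) (v0 T)) (vsub (v3 T) (v0 T)) <> 0.

Definition verts (T : tetra) : list pt := [v0 T; v1 T; v2 T; v3 T].

(** Elements (z, (w, t)) of C x (C x R) encoded as z = z1 + i z2, w = w1 + i w2. *)
Record tau : Type := Tau { z1 : R; z2 : R; w1 : R; w2 : R; tt : R }.

Definition inB (t : tau) : Prop :=
  0 < z2 t /\ 0 < z1 t /\ z1 t <= 1/2 /\ (z1 t - 1)^2 + z2 t ^2 <= 1.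

Definition inV (t : tau) : Prop :=
  let zz := z1 t ^2 + z2 t ^2 in
  0 < tt t /\
  zz <= w1 t ^2 + w2 t ^2 + tt t ^2 <= 1 /\
  zz <= (w1 t - 1)^2 + w2 t ^2 + tt t ^2 <= 1 /\
  (w1 t - z1 t)^2 + (w2 t - z2 t)^2 + tt t ^2 <= 1.

Definition inT (t : tau) : Prop := inB t /\ inV t.

Definition labelling (T : tetra) (A B C D : pt) : Prop :=
  Permutation [A; B; C; D] (verts T).

Definition qualifies (T : tetra) (A B C D : pt) : Prop :=
  labelling T A B C D /\
  (forall X Y, In X (verts T) -> In Y (verts T) -> dist2 X Y <= dist2 A B) /\
  dist2 A C <= dist2 A D /\ dist2 A C <= dist2 B C /\ dist2 A C <= dist2 B D.

(** The labellings admissible for the normalization: among qualifying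
    labellings, |AC| is minimal, and among those ∠BAC is minimal. Remaining ties are left free. *)
Definition admissible (T : tetra) (A B C D : pt) : Prop :=
  qualifies T A B C D /\
  (forall A' B' C' D', qualifies T A' B' C' D' -> dist2 A C <= dist2 A' C') /\
  (forall A' B' C' D', qualifies T A' B' C' D' -> dist2 A' C' = dist2 A C ->
      angle B A C <= angle B' A' C').

(** Normalized coordinates: the images A' = 0, B' = (1,0,0),
    C' = (c1,c2,0) with c2 > 0, D' = (d1,d2,d3) of A, B, C, D under a
    similarity of ratio 1/|AB|; a map of the four vertices with all
    distances scaled by 1/|AB| is exactly the restriction of such a
    similarity of R^3. *)
Definition normal_coords (A B C D : pt) (c1 c2 d1 d2 d3 : R) : Prop :=
  let A' := Pt 0 0 0 in
  let B' := Pt 1 0 0 in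
  let C' := Pt c1 c2 0 in
  let D' := Pt d1 d2 d3 in
  0 < c2 /\
  dist2 A' B' * dist2 A B = dist2 A B /\
  dist2 A' C' * dist2 A B = dist2 A C /\
  dist2 A' D' * dist2 A B = dist2 A D /\
  dist2 B' C' * dist2 A B = dist2 B C /\
  dist2 B' D' * dist2 A B = dist2 B D /\
  dist2 C' D' * dist2 A B = dist2 C D.

(** [is_normalization T τ]: τ is a possible value of N(T) (for some
    admissible resolution of ties). *)
Definition is_normalization (T : tetra) (t : tau) : Prop :=
  nondegenerate T /\
  exists A B C D c1 c2 d1 d2 d3,
    admissible T A B C D /\ normal_coords A B C D c1 c2 d1 d2 d3 /\
    t = Tau c1 c2 d1 d2 (Rabs d3).

Definition ptA (t : tau) : pt := Pt 0 0 0.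
Definition ptB (t : tau) : pt := Pt 1 0 0.
Definition ptC (t : tau) : pt := Pt (z1 t) (z2 t) 0.
Definition ptD (t : tau) : pt := Pt (w1 t) (w2 t) (tt t).
Definition ptM (t : tau) : pt := Pt (1/2) 0 0.

(** LEB maps, as relations (τ' is a possible value of Φ(τ), τ ∈ 𝒯). *)
Definition PhiL (t t' : tau) : Prop :=
  inT t /\ is_normalization (Tetra (ptA t) (ptM t) (ptC t) (ptD t)) t'.
Definition PhiR (t t' : tau) : Prop :=
  inT t /\ is_normalization (Tetra (ptM t) (ptB t) (ptC t) (ptD t)) t'.

Inductive orbit (t0 : tau) : tau -> Prop :=
  | orbit_refl : orbit t0 t0
  | orbit_L : forall s s', orbit t0 s -> PhiL s s' -> orbit t0 s'
  | orbit_R : forall s s', orbit t0 s -> PhiR s s' -> orbit t0 s'.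

Definition tauR : tau := Tau (1/2) (sqrt 3 / 2) (1/2) (sqrt 3 / 6) (sqrt 6 / 3).
Definition tauC : tau := Tau (1/2) (1/2) (1/2) (1/2) (sqrt 2 / 2).
Definition cube_corner : tetra :=
  Tetra (Pt 0 0 0) (Pt 1 0 0) (Pt 0 1 0) (Pt 0 0 1).

Definition tau1 : tau := Tau (1/4) (sqrt 3 / 4) (1/2) (sqrt 3 / 6) (sqrt 6 / 3).
Definition tau2 : tau := Tau (1/4) (sqrt 3 / 4) (1/2) (sqrt 3 / 3) (sqrt 6 / 6).
Definition tau3 : tau := Tau (1/2) (sqrt 3 / 6) (1/3) 0 (sqrt 2 / 3).
Definition tau4 : tau := Tau (1/2) (sqrt 2 / 4) (1/2) (sqrt 2 / 4) (sqrt 2 / 4).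
Definition tau5 : tau := Tau (1/4) (sqrt 3 / 4) (1/2) (sqrt 3 / 6) (sqrt 6 / 6).
Definition tau6 : tau := Tau (1/2) (1/2) (1/2) 0 (1/2).

(* Which labelling of a tetrahedron is
   admissible depends only on its six squared edge lengths (the angle tie-break
   reduces to them by the law of cosines), and so do the normalized coordinates.
   So each LEB step is checked from the edge table of the child tetrahedron, all of
   whose entries are rational although the coordinates involve sqrt 2 and sqrt 3. *)

From Stdlib Require Import Reals Lra Psatz Permutation List.
Import ListNotations.
Open Scope R_scope.

Lemma dist2_sym (P Q : pt) : dist2 P Q = dist2 Q P.
Proof. destruct P, Q; unfold dist2, dot, vsub; cbn; ring. Qed.

Lemma dist2_refl (P : pt) : dist2 P P = 0.
Proof. destruct P; unfold dist2, dot, vsub; cbn; ring. Qed.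

Lemma dot_polar (A B C : pt) :
  dot (vsub B A) (vsub C A) = (dist2 A B + dist2 A C - dist2 B C) / 2.
Proof. destruct A, B, C; unfold dist2, dot, vsub; cbn; field. Qed.

Lemma acos_antimonotone (x y : R) : x <= y -> acos y <= acos x.
Proof.
  intros Hxy.
  destruct (Rlt_or_le x (-1)) as [Hx | Hx].
  { assert (acos x = PI) by (unfold acos; destruct (Rle_dec x (-1)); [reflexivity | lra]).
    pose proof (acos_bound y); lra. }
  destruct (Rlt_or_le 1 y) as [Hy | Hy].
  { assert (acos y = 0).
    { unfold acos; destruct (Rle_dec y (-1)); [lra |].
      destruct (Rle_dec 1 y); [reflexivity | lra]. }
    pose proof (acos_bound x); lra. }
  apply Rnot_lt_le; intros Hlt.
  pose proof (acos_bound x); pose proof (acos_bound y).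
  pose proof (cos_decreasing_1 (acos x) (acos y) ltac:(lra) ltac:(lra) ltac:(lra) ltac:(lra) Hlt).
  rewrite !cos_acos in * by lra; lra.
Qed.

(* Stated for [0 <= d] because [x / 0 = 0] in Stdlib. *)
Lemma Rdiv_le_compat_nonneg (x y d : R) : x <= y -> 0 <= d -> x / d <= y / d.
Proof.
  intros Hxy [Hd | <-].
  - apply Rmult_le_compat_r; [left; apply Rinv_0_lt_compat |]; lra.
  - unfold Rdiv; rewrite Rinv_0; lra.
Qed.

(* Law of cosines, via [dot_polar]. *)
Lemma angle_le_of_dist2 (A B C A' B' C' : pt) :
  dist2 A B = dist2 A' B' -> dist2 A C = dist2 A' C' -> dist2 B C <= dist2 B' C' ->
  angle B A C <= angle B' A' C'.
Proof.
  intros HAB HAC HBC; unfold angle.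
  rewrite !dot_polar, HAB, HAC.
  apply acos_antimonotone, Rdiv_le_compat_nonneg; [lra |].
  apply Rmult_le_pos; apply sqrt_pos.
Qed.

Lemma labelling_In (T : tetra) (A B C D X : pt) :
  labelling T A B C D -> In X [A; B; C; D] -> In X (verts T).
Proof. intros HT HX; exact (Permutation_in X HT HX). Qed.

(* Both AB and A'B' are longest edges, hence equally long: only the AC-minimality
   and the angle tie-break remain to be compared, and both are metric conditions. *)
Lemma admissible_of_dist2 (T : tetra) (A B C D : pt) :
  qualifies T A B C D ->
  (forall A' B' C' D', labelling T A' B' C' D' -> dist2 A' B' = dist2 A B ->
     dist2 A' C' <= dist2 A' D' -> dist2 A' C' <= dist2 B' C' ->
     dist2 A' C' <= dist2 B' D' ->
     dist2 A C <= dist2 A' C' /\ (dist2 A' C' = dist2 A C -> dist2 B C <= dist2 B' C')) ->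
  admissible T A B C D.
Proof.
  intros HQ Hcmp.
  assert (Hlongest : forall A' B' C' D', qualifies T A' B' C' D' -> dist2 A' B' = dist2 A B).
  { intros A' B' C' D' (Hl' & Hmax' & _).
    destruct HQ as (Hl & Hmax & _).
    apply Rle_antisym.
    - apply Hmax; apply (labelling_In T A' B' C' D'); simpl; auto.
    - apply Hmax'; apply (labelling_In T A B C D); simpl; auto. }
  split; [exact HQ | split].
  - intros A' B' C' D' HQ'.
    pose proof (Hlongest _ _ _ _ HQ') as HAB.
    destruct HQ' as (Hl' & _ & h1 & h2 & h3).
    apply (Hcmp A' B' C' D'); assumption.
  - intros A' B' C' D' HQ' HAC.
    pose proof (Hlongest _ _ _ _ HQ') as HAB.
    destruct HQ' as (Hl' & _ & h1 & h2 & h3).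
    apply angle_le_of_dist2; try congruence.
    apply (Hcmp A' B' C' D'); assumption.
Qed.

Lemma is_normalization_intro (T : tetra) (A B C D : pt) (t : tau) :
  nondegenerate T -> admissible T A B C D ->
  normal_coords A B C D (z1 t) (z2 t) (w1 t) (w2 t) (tt t) -> 0 <= tt t ->
  is_normalization T t.
Proof.
  intros Hnd Hadm Hnc Ht.
  split; [exact Hnd |].
  exists A, B, C, D, (z1 t), (z2 t), (w1 t), (w2 t), (tt t).
  split; [exact Hadm | split; [exact Hnc |]].
  rewrite Rabs_pos_eq by exact Ht; destruct t; reflexivity.
Qed.

Lemma Permutation_3_inv {X : Type} (a b c p q r : X) :
  Permutation [a; b; c] [p; q; r] ->
  (a = p /\ b = q /\ c = r) \/ (a = p /\ b = r /\ c = q) \/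
  (a = q /\ b = p /\ c = r) \/ (a = q /\ b = r /\ c = p) \/
  (a = r /\ b = p /\ c = q) \/ (a = r /\ b = q /\ c = p).
Proof.
  intros H.
  destruct (Permutation_in a H (in_eq a _)) as [<- | [<- | [<- | []]]].
  - apply Permutation_cons_inv, Permutation_length_2 in H; tauto.
  - apply (Permutation_cons_app_inv [p] [r]), Permutation_length_2 in H; tauto.
  - apply (Permutation_cons_app_inv [p; q] []), Permutation_length_2 in H; tauto.
Qed.

Lemma Permutation_4_inv {X : Type} (a b c d p q r s : X) :
  Permutation [a; b; c; d] [p; q; r; s] ->
  (a = p /\ Permutation [b; c; d] [q; r; s]) \/
  (a = q /\ Permutation [b; c; d] [p; r; s]) \/
  (a = r /\ Permutation [b; c; d] [p; q; s]) \/
  (a = s /\ Permutation [b; c; d] [p; q; r]).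
Proof.
  intros H.
  destruct (Permutation_in a H (in_eq a _)) as [<- | [<- | [<- | [<- | []]]]].
  - apply Permutation_cons_inv in H; tauto.
  - apply (Permutation_cons_app_inv [p] [r; s]) in H; tauto.
  - apply (Permutation_cons_app_inv [p; q] [s]) in H; tauto.
  - apply (Permutation_cons_app_inv [p; q; r] []) in H; tauto.
Qed.

Lemma orbit_trans (a b c : tau) : orbit a b -> orbit b c -> orbit a c.
Proof.
  intros Hab Hbc; induction Hbc.
  - exact Hab.
  - eapply orbit_L; eauto.
  - eapply orbit_R; eauto.
Qed.

Definition edge_lengths (P Q U V : pt) (pq pu pv qu qv uv : R) : Prop :=
  dist2 P Q = pq /\ dist2 P U = pu /\ dist2 P V = pv /\
  dist2 Q U = qu /\ dist2 Q V = qv /\ dist2 U V = uv.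

Lemma sqrt6_mult : sqrt 6 = sqrt 2 * sqrt 3.
Proof. rewrite <- sqrt_mult by lra; f_equal; lra. Qed.

(* All coordinates lie in Q(sqrt 2, sqrt 3): abstract the two roots as
   positive reals [a], [b] with [a * a = 3], [b * b = 2] and call [nra]. *)
Ltac sqrt_arith :=
  unfold dist2, dot, vsub, det3, ptA, ptB, ptC, ptD, ptM,
    tauR, tauC, tau1, tau2, tau3, tau4, tau5, tau6 in *;
  cbn [px py pz z1 z2 w1 w2 tt] in *;
  rewrite ?sqrt6_mult;
  pose proof (sqrt_sqrt 2 ltac:(lra)); pose proof (sqrt_sqrt 3 ltac:(lra));
  pose proof (sqrt_lt_R0 2 ltac:(lra)); pose proof (sqrt_lt_R0 3 ltac:(lra));
  generalize dependent (sqrt 2); generalize dependent (sqrt 3);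
  intros a ? ? b ? ?; repeat split; nra.

Ltac rewrite_edges E :=
  let e1 := fresh in let e2 := fresh in let e3 := fresh in
  let e4 := fresh in let e5 := fresh in let e6 := fresh in
  destruct E as (e1 & e2 & e3 & e4 & e5 & e6);
  rewrite ?dist2_refl;
  repeat match goal with
  | H : dist2 ?X ?Y = _ |- context [dist2 ?X ?Y] => rewrite H
  | H : dist2 ?X ?Y = _ |- context [dist2 ?Y ?X] => rewrite (dist2_sym Y X), H
  end;
  clear e1 e2 e3 e4 e5 e6.

Ltac solve_permutation :=
  first
  [ apply Permutation_refl
  | match goal with
    | |- Permutation (_ :: _) _ =>
        first [ apply (Permutation_cons_app [] _)
              | apply (Permutation_cons_app [_] _)
              | apply (Permutation_cons_app [_; _] _)
              | apply (Permutation_cons_app [_; _; _] _) ];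
        simpl app; solve_permutation
    end ].

Ltac labelling_cases H :=
  unfold labelling in H; cbv [verts v0 v1 v2 v3] in H;
  apply Permutation_4_inv in H;
  destruct H as [[-> H] | [[-> H] | [[-> H] | [-> H]]]];
  apply Permutation_3_inv in H;
  destruct H as [(-> & -> & ->) | [(-> & -> & ->) | [(-> & -> & ->) |
                [(-> & -> & ->) | [(-> & -> & ->) | (-> & -> & ->)]]]]].

Ltac prove_admissible E :=
  apply admissible_of_dist2;
  [ split;
    [ unfold labelling; cbv [verts v0 v1 v2 v3]; solve_permutation
    | split;
      [ intros X Y HX HY; cbv [verts v0 v1 v2 v3 In] in HX, HY;
        destruct HX as [<- | [<- | [<- | [<- | []]]]];
        destruct HY as [<- | [<- | [<- | [<- | []]]]];
        rewrite_edges E; lra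
      | rewrite_edges E; repeat split; lra ] ]
  | intros A' B' C' D' Hl; labelling_cases Hl;
    rewrite_edges E; intros; split; intros; lra ].

Ltac normalize_by E A B C D :=
  apply (is_normalization_intro _ A B C D);
  [ unfold nondegenerate; cbn [v0 v1 v2 v3]; sqrt_arith
  | prove_admissible E
  | unfold normal_coords; cbv zeta; rewrite_edges E; sqrt_arith
  | sqrt_arith ].

Lemma edges_cube_corner :
  edge_lengths (Pt 0 0 0) (Pt 1 0 0) (Pt 0 1 0) (Pt 0 0 1) 1 1 1 2 2 2.
Proof. unfold edge_lengths; sqrt_arith. Qed.

Lemma normalization_cube_corner : is_normalization cube_corner tauC.
Proof.
  unfold cube_corner.
  normalize_by edges_cube_corner (Pt 1 0 0) (Pt 0 1 0) (Pt 0 0 0) (Pt 0 0 1).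
Qed.

Lemma edges_tauR_left :
  edge_lengths (ptA tauR) (ptM tauR) (ptC tauR) (ptD tauR) (1/4) 1 1 (3/4) (3/4) 1.
Proof. unfold edge_lengths; sqrt_arith. Qed.

Lemma edges_tauR_right :
  edge_lengths (ptM tauR) (ptB tauR) (ptC tauR) (ptD tauR) (1/4) (3/4) (3/4) 1 1 1.
Proof. unfold edge_lengths; sqrt_arith. Qed.

Lemma edges_tau1_right :
  edge_lengths (ptM tau1) (ptB tau1) (ptC tau1) (ptD tau1) (1/4) (1/4) (3/4) (3/4) 1 (3/4).
Proof. unfold edge_lengths; sqrt_arith. Qed.

Lemma edges_tau2_left :
  edge_lengths (ptA tau2) (ptM tau2) (ptC tau2) (ptD tau2) (1/4) (1/4) (3/4) (1/4) (1/2) (1/4).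
Proof. unfold edge_lengths; sqrt_arith. Qed.

Lemma edges_tau3_right :
  edge_lengths (ptM tau3) (ptB tau3) (ptC tau3) (ptD tau3) (1/4) (1/12) (1/4) (1/3) (2/3) (1/3).
Proof. unfold edge_lengths; sqrt_arith. Qed.

Lemma edges_tau4_left :
  edge_lengths (ptA tau4) (ptM tau4) (ptC tau4) (ptD tau4) (1/4) (3/8) (1/2) (1/8) (1/4) (1/8).
Proof. unfold edge_lengths; sqrt_arith. Qed.

Lemma edges_tau5_left :
  edge_lengths (ptA tau5) (ptM tau5) (ptC tau5) (ptD tau5) (1/4) (1/4) (1/2) (1/4) (1/4) (1/4).
Proof. unfold edge_lengths; sqrt_arith. Qed.

Lemma edges_tau6_left :
  edge_lengths (ptA tau6) (ptM tau6) (ptC tau6) (ptD tau6) (1/4) (1/2) (1/2) (1/4) (1/4) (1/2).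
Proof. unfold edge_lengths; sqrt_arith. Qed.

Lemma inT_tauR : inT tauR.
Proof. unfold inT, inB, inV; cbv zeta; sqrt_arith. Qed.

Lemma inT_tau1 : inT tau1.
Proof. unfold inT, inB, inV; cbv zeta; sqrt_arith. Qed.

Lemma inT_tau2 : inT tau2.
Proof. unfold inT, inB, inV; cbv zeta; sqrt_arith. Qed.

Lemma inT_tau3 : inT tau3.
Proof. unfold inT, inB, inV; cbv zeta; sqrt_arith. Qed.

Lemma inT_tau4 : inT tau4.
Proof. unfold inT, inB, inV; cbv zeta; sqrt_arith. Qed.

Lemma inT_tau5 : inT tau5.
Proof. unfold inT, inB, inV; cbv zeta; sqrt_arith. Qed.

Lemma inT_tau6 : inT tau6.
Proof. unfold inT, inB, inV; cbv zeta; sqrt_arith. Qed.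

Lemma PhiL_tauR : PhiL tauR tau1.
Proof.
  split; [exact inT_tauR |].
  normalize_by edges_tauR_left (ptA tauR) (ptC tauR) (ptM tauR) (ptD tauR).
Qed.

Lemma PhiR_tauR : PhiR tauR tau1.
Proof.
  split; [exact inT_tauR |].
  normalize_by edges_tauR_right (ptB tauR) (ptC tauR) (ptM tauR) (ptD tauR).
Qed.

Lemma PhiR_tau1 : PhiR tau1 tau2.
Proof.
  split; [exact inT_tau1 |].
  normalize_by edges_tau1_right (ptB tau1) (ptD tau1) (ptM tau1) (ptC tau1).
Qed.

Lemma PhiL_tau2 : PhiL tau2 tau3.
Proof.
  split; [exact inT_tau2 |].
  normalize_by edges_tau2_left (ptA tau2) (ptD tau2) (ptC tau2) (ptM tau2).
Qed.

Lemma PhiR_tau3 : PhiR tau3 tau4.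
Proof.
  split; [exact inT_tau3 |].
  normalize_by edges_tau3_right (ptB tau3) (ptD tau3) (ptM tau3) (ptC tau3).
Qed.

Lemma PhiL_tau4 : PhiL tau4 tau5.
Proof.
  split; [exact inT_tau4 |].
  normalize_by edges_tau4_left (ptD tau4) (ptA tau4) (ptC tau4) (ptM tau4).
Qed.

Lemma PhiL_tau5 : PhiL tau5 tau6.
Proof.
  split; [exact inT_tau5 |].
  normalize_by edges_tau5_left (ptA tau5) (ptD tau5) (ptM tau5) (ptC tau5).
Qed.

Lemma PhiL_tau6 : PhiL tau6 tauC.
Proof.
  split; [exact inT_tau6 |].
  normalize_by edges_tau6_left (ptA tau6) (ptC tau6) (ptM tau6) (ptD tau6).
Qed.

Theorem theorem3p4 :
  is_normalization cube_corner tauC /\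
  orbit tauR tauC /\
  (forall s, orbit tauC s -> orbit tauR s) /\
  PhiL tauR tau1 /\ PhiR tauR tau1 /\
  PhiR tau1 tau2 /\ PhiL tau2 tau3 /\ PhiR tau3 tau4 /\
  PhiL tau4 tau5 /\ PhiL tau5 tau6 /\ PhiL tau6 tauC.
Proof.
  assert (Horbit : orbit tauR tauC).
  { apply (orbit_L _ tau6); [| exact PhiL_tau6].
    apply (orbit_L _ tau5); [| exact PhiL_tau5].
    apply (orbit_L _ tau4); [| exact PhiL_tau4].
    apply (orbit_R _ tau3); [| exact PhiR_tau3].
    apply (orbit_L _ tau2); [| exact PhiL_tau2].
    apply (orbit_R _ tau1); [| exact PhiR_tau1].
    apply (orbit_L _ tauR); [apply orbit_refl | exact PhiL_tauR]. }
  split; [exact normalization_cube_corner |].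
  split; [exact Horbit |].
  split; [intros s Hs; exact (orbit_trans _ _ _ Horbit Hs) |].
  exact (conj PhiL_tauR (conj PhiR_tauR (conj PhiR_tau1 (conj PhiL_tau2
           (conj PhiR_tau3 (conj PhiL_tau4 (conj PhiL_tau5 PhiL_tau6))))))).
Qed.
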